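(* Let $(X,d)$ be a metric space, let $\sigma$ and $\tau$ be conical bicombings on $X$, and let $n\ge1$ be an integer. For $x,y\in X$ set $c_{xy}(n;0):=x$, $c_{xy}(n;n):=y$ and \[ c_{xy}(n;i):=\sigma\big(\tau_{xy}(\tfrac{i-1}{n}),\tau_{xy}(\tfrac{i+1}{n}),\tfrac12\big)\quad(1\le i\le n-1), \] and define $c_\sigma(n;\tau)\colon X\times X\times[0,1]\to X$ by \[ c_\sigma(n;\tau)\big(x,y,(1-\lambda)\tfrac{i}{n}+\lambda\tfrac{i+1}{n}\big):=\sigma\big(c_{xy}(n;i),c_{xy}(n;i+1),\lambda\big) \] for $0\le i\le n-1$, $\lambda\in[0,1]$. Then $c_\sigma(n;\tau)$ is a conical bicombing on $X$. Moreover, if $\sigma$ is consistent, then $c_\sigma(n;\sigma)=\sigma$.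
   Context: A bicombing on $(X,d)$ is a map $\sigma\colon X\times X\times[0,1]\to X$ such that each $\sigma_{xy}:=\sigma(x,y,\cdot)$ is a geodesic from $x$ to $y$ ($\sigma_{xy}(0)=x$, $\sigma_{xy}(1)=y$, $d(\sigma_{xy}(s),\sigma_{xy}(t))=|s-t|d(x,y)$); it is conical if $d(\sigma_{xy}(t),\sigma_{x'y'}(t))\le(1-t)d(x,x')+t\,d(y,y')$ for all $x,y,x',y'$, $t\in[0,1]$. A bicombing $\sigma$ is consistent if $\sigma_{pq}([0,1])\subset\sigma_{xy}([0,1])$ whenever $p,q\in\sigma_{xy}([0,1])$. *)

From Stdlib Require Import Reals Lra Lia ZArith Arith.
Open Scope R_scope.

Definition is_metric {X : Type} (d : X -> X -> R) : Prop :=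
  (forall x y, 0 <= d x y) /\
  (forall x y, d x y = 0 <-> x = y) /\
  (forall x y, d x y = d y x) /\
  (forall x y z, d x z <= d x y + d y z).

(* sigma : X -> X -> R -> X ; only the values for t in [0,1] matter. *)
Definition is_bicombing {X : Type} (d : X -> X -> R) (sigma : X -> X -> R -> X) : Prop :=
  forall x y,
    sigma x y 0 = x /\ sigma x y 1 = y /\
    (forall s t, 0 <= s <= 1 -> 0 <= t <= 1 ->
       d (sigma x y s) (sigma x y t) = Rabs (s - t) * d x y).

Definition is_conical {X : Type} (d : X -> X -> R) (sigma : X -> X -> R -> X) : Prop :=
  forall x y x' y' t, 0 <= t <= 1 ->
    d (sigma x y t) (sigma x' y' t) <= (1 - t) * d x x' + t * d y y'.

Definition conical_bicombing {X : Type} (d : X -> X -> R) (sigma : X -> X -> R -> X) : Prop :=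
  is_bicombing d sigma /\ is_conical d sigma.

Definition on_geod {X : Type} (sigma : X -> X -> R -> X) (x y p : X) : Prop :=
  exists s, 0 <= s <= 1 /\ p = sigma x y s.

Definition is_consistent {X : Type} (sigma : X -> X -> R -> X) : Prop :=
  forall x y p q, on_geod sigma x y p -> on_geod sigma x y q ->
    forall r, 0 <= r <= 1 -> on_geod sigma x y (sigma p q r).

Definition cpt {X : Type} (sigma tau : X -> X -> R -> X) (n : nat) (x y : X) (i : nat) : X :=
  if Nat.eqb i 0 then x
  else if Nat.eqb i n then y
  else sigma (tau x y (INR (i - 1) / INR n)) (tau x y (INR (i + 1) / INR n)) (1/2).

Definition piece (n : nat) (t : R) : nat :=
  Nat.min (Z.to_nat (Int_part (INR n * t))) (n - 1).

(* c_sigma(n;tau)(x,y,t) = sigma(c_xy(n;i), c_xy(n;i+1), lambda) where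
   t = (1-lambda) i/n + lambda (i+1)/n, i.e. lambda = n t - i. *)
Definition c_sigma {X : Type} (sigma : X -> X -> R -> X) (n : nat) (tau : X -> X -> R -> X)
  : X -> X -> R -> X :=
  fun x y t =>
    let i := piece n t in
    sigma (cpt sigma tau n x y i) (cpt sigma tau n x y (S i)) (INR n * t - INR i).

(* A path g following sigma between consecutive nodes p 0 = x, ..., p n = y that
   are at distance at most d x y / n is itself a linear geodesic: the triangle
   inequality gives d (g s) (g t) <= (t - s) d x y, and equality is forced by
   comparing with the endpoints.  For c_sigma(n;tau) the node
   c_xy(n;i) = sigma(tau_xy(a_i), tau_xy(b_i), 1/2) has parameters with
   a_i + b_i = 2i/n, both nondecreasing in i, so conicality of sigma at 1/2 and the
   geodesic property of tau bound the steps by d x y / n, and conicality of tau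
   transfers to every node and then, by convexity, along each piece.  If sigma is
   consistent, sigma(sigma_xy(a), sigma_xy(b), l) = sigma_xy((1 - l) a + l b),
   so every node is sigma_xy(i/n) and the path is sigma_xy itself. *)
From Stdlib Require Import Reals Lra Lia ZArith.
Open Scope R_scope.

Lemma INR_ratio_le n i j : (0 < n)%nat -> (i <= j)%nat -> INR i / INR n <= INR j / INR n.
Proof.
  intros Hn Hij; apply Rmult_le_compat_r.
  - left; apply Rinv_0_lt_compat, lt_0_INR, Hn.
  - apply le_INR, Hij.
Qed.

Lemma INR_ratio_range n i : (0 < n)%nat -> (i <= n)%nat -> 0 <= INR i / INR n <= 1.
Proof.
  intros Hn Hi; split.
  - replace 0 with (INR 0 / INR n) by (simpl; unfold Rdiv; ring).
    apply INR_ratio_le; lia.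
  - rewrite <- (Rdiv_diag (INR n)) by (apply not_0_INR; lia).
    apply INR_ratio_le; assumption.
Qed.

Lemma eq_mul_of_Rabs_split (l S B : R) : 0 <= l <= 1 ->
  Rabs S = l * Rabs B -> Rabs (B - S) = (1 - l) * Rabs B -> S = l * B.
Proof. unfold Rabs; intros Hl; repeat destruct Rcase_abs; intros; nra. Qed.

Lemma piece_spec n t : (1 <= n)%nat -> 0 <= t <= 1 ->
  (piece n t < n)%nat /\ INR (piece n t) <= INR n * t <= INR (piece n t) + 1.
Proof.
  intros Hn Ht; unfold piece.
  assert (Hnt : 0 <= INR n * t <= INR n) by (pose proof (pos_INR n); split; nra).
  destruct (base_Int_part (INR n * t)) as [Hfl Hfl'].
  assert (Hz : (0 <= Int_part (INR n * t))%Z).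
  { assert (H : IZR (-1) < IZR (Int_part (INR n * t))) by lra.
    apply lt_IZR in H; lia. }
  set (k := Z.to_nat (Int_part (INR n * t))).
  assert (Hk : INR k = IZR (Int_part (INR n * t))).
  { unfold k; rewrite INR_IZR_INZ, Z2Nat.id; auto. }
  destruct (Nat.min_spec k (n - 1)) as [[Hlt ->] | [Hge ->]].
  - split; [lia | rewrite Hk; lra].
  - split; [lia |].
    assert (INR (n - 1) <= INR k) by (apply le_INR; lia).
    rewrite minus_INR in * by lia; simpl in *; lra.
Qed.

Lemma piece_0 n : (1 <= n)%nat -> piece n 0 = 0%nat.
Proof.
  intros Hn; destruct (piece_spec n 0 Hn) as [_ [Hi _]]; [lra |].
  rewrite Rmult_0_r in Hi; apply (INR_le _ 0) in Hi; lia.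
Qed.

Lemma piece_1 n : (1 <= n)%nat -> piece n 1 = (n - 1)%nat.
Proof.
  intros Hn; destruct (piece_spec n 1 Hn) as [Hlt [_ Hi]]; [lra |].
  rewrite Rmult_1_r, <- S_INR in Hi; apply INR_le in Hi; lia.
Qed.

(* c_xy(n;i) = sigma(tau_xy(cpt_lo n i), tau_xy(cpt_hi n i), 1/2) also at the end
   nodes i = 0 and i = n, where both parameters are 0, resp. 1 (see cpt_eq). *)
Definition cpt_lo (n i : nat) : R :=
  if Nat.eqb i 0 then 0 else if Nat.eqb i n then 1 else INR (i - 1) / INR n.

Definition cpt_hi (n i : nat) : R :=
  if Nat.eqb i 0 then 0 else if Nat.eqb i n then 1 else INR (i + 1) / INR n.

Lemma cpt_n {X : Type} (sigma tau : X -> X -> R -> X) n x y :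
  (1 <= n)%nat -> cpt sigma tau n x y n = y.
Proof.
  intros Hn; unfold cpt; rewrite Nat.eqb_refl; destruct (Nat.eqb_spec n 0); [lia | reflexivity].
Qed.

Section CptLoHi.

Variable n : nat.
Hypothesis n_ge1 : (1 <= n)%nat.

Lemma cpt_lo_hi_range i : (i <= n)%nat ->
  0 <= cpt_lo n i <= 1 /\ 0 <= cpt_hi n i <= 1.
Proof.
  intros Hi; unfold cpt_lo, cpt_hi.
  destruct (Nat.eqb_spec i 0); [lra |].
  destruct (Nat.eqb_spec i n); [lra |].
  split; apply INR_ratio_range; lia.
Qed.

Lemma cpt_lo_hi_sum i : (i <= n)%nat -> cpt_lo n i + cpt_hi n i = 2 * (INR i / INR n).
Proof.
  intros Hi; pose proof (lt_0_INR n n_ge1).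
  unfold cpt_lo, cpt_hi.
  destruct (Nat.eqb_spec i 0) as [-> |]; [simpl; field; lra |].
  destruct (Nat.eqb_spec i n) as [-> |]; [field; lra |].
  rewrite minus_INR, plus_INR by lia; simpl; field; lra.
Qed.

Lemma cpt_lo_le_succ i : (i < n)%nat -> cpt_lo n i <= cpt_lo n (S i).
Proof.
  intros Hi.
  pose proof (INR_ratio_range n (i - 1) ltac:(lia) ltac:(lia)).
  pose proof (INR_ratio_range n (S i - 1) ltac:(lia) ltac:(lia)).
  pose proof (INR_ratio_le n (i - 1) (S i - 1) ltac:(lia) ltac:(lia)).
  unfold cpt_lo.
  destruct (Nat.eqb_spec i 0), (Nat.eqb_spec i n), (Nat.eqb_spec (S i) 0), (Nat.eqb_spec (S i) n);
    try (exfalso; lia); lra.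
Qed.

Lemma cpt_hi_le_succ i : (i < n)%nat -> cpt_hi n i <= cpt_hi n (S i).
Proof.
  intros Hi.
  pose proof (INR_ratio_range n (i + 1) ltac:(lia) ltac:(lia)).
  pose proof (INR_ratio_le n (i + 1) (S i + 1) ltac:(lia) ltac:(lia)).
  unfold cpt_hi.
  destruct (Nat.eqb_spec i 0), (Nat.eqb_spec i n), (Nat.eqb_spec (S i) 0), (Nat.eqb_spec (S i) n);
    try (exfalso; lia); lra.
Qed.

End CptLoHi.

Definition is_geodesic {X : Type} (d : X -> X -> R) (g : R -> X) (x y : X) : Prop :=
  g 0 = x /\ g 1 = y /\
  (forall s t, 0 <= s <= 1 -> 0 <= t <= 1 -> d (g s) (g t) = Rabs (s - t) * d x y).

Definition polygon {X : Type} (sigma : X -> X -> R -> X) (n : nat) (p : nat -> X) (t : R) : X :=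
  sigma (p (piece n t)) (p (S (piece n t))) (INR n * t - INR (piece n t)).

Section Metric.

Variables (X : Type) (d : X -> X -> R).
Hypothesis d_metric : is_metric d.

Lemma dist_ge0 x y : 0 <= d x y.
Proof. apply d_metric. Qed.

Lemma dist_eq0 x y : d x y = 0 -> x = y.
Proof. apply d_metric. Qed.

Lemma dist_xx x : d x x = 0.
Proof. apply d_metric; reflexivity. Qed.

Lemma dist_sym x y : d x y = d y x.
Proof. apply d_metric. Qed.

Lemma dist_triangle x y z : d x z <= d x y + d y z.
Proof. apply d_metric. Qed.

Lemma chain_dist_le (p : nat -> X) n L :
  (forall i, (i < n)%nat -> d (p i) (p (S i)) <= L) ->
  forall k i, (i + k <= n)%nat -> d (p i) (p (i + k)%nat) <= INR k * L.
Proof.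
  intros Hstep; induction k as [| k IH]; intros i Hik.
  - rewrite Nat.add_0_r, dist_xx; simpl; lra.
  - rewrite S_INR, Nat.add_succ_r.
    pose proof (dist_triangle (p i) (p (i + k)%nat) (p (S (i + k)))).
    pose proof (IH i ltac:(lia)); pose proof (Hstep (i + k)%nat ltac:(lia)); lra.
Qed.

Section Bicombing.

Variable sigma : X -> X -> R -> X.
Hypothesis sigma_bicombing : is_bicombing d sigma.

Lemma bicombing_0 x y : sigma x y 0 = x.
Proof. apply sigma_bicombing. Qed.

Lemma bicombing_1 x y : sigma x y 1 = y.
Proof. apply sigma_bicombing. Qed.

Lemma bicombing_dist x y s t : 0 <= s <= 1 -> 0 <= t <= 1 ->
  d (sigma x y s) (sigma x y t) = Rabs (s - t) * d x y.
Proof. apply sigma_bicombing. Qed.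

Lemma bicombing_dist_le x y s t : 0 <= s -> s <= t -> t <= 1 ->
  d (sigma x y s) (sigma x y t) = (t - s) * d x y.
Proof.
  intros; rewrite bicombing_dist, Rabs_left1 by lra; ring.
Qed.

Lemma bicombing_dist_l x y t : 0 <= t <= 1 -> d x (sigma x y t) = t * d x y.
Proof.
  intros; rewrite <- (bicombing_0 x y) at 1; rewrite bicombing_dist_le by lra; ring.
Qed.

Lemma bicombing_dist_r x y t : 0 <= t <= 1 -> d (sigma x y t) y = (1 - t) * d x y.
Proof.
  intros; rewrite <- (bicombing_1 x y) at 2; apply bicombing_dist_le; lra.
Qed.

Lemma bicombing_xx z t : 0 <= t <= 1 -> sigma z z t = z.
Proof.
  intros; apply dist_eq0; rewrite dist_sym, bicombing_dist_l, dist_xx by lra; ring.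
Qed.

(* Consistency only says that the point lies on sigma_xy; its parameter is then
   pinned down by its distances to the two given points.  Not dividing by d x y
   keeps the degenerate case x = y inside the same argument. *)
Lemma consistent_bicombing_comp x y a b l :
  is_consistent sigma -> 0 <= a <= 1 -> 0 <= b <= 1 -> 0 <= l <= 1 ->
  sigma (sigma x y a) (sigma x y b) l = sigma x y ((1 - l) * a + l * b).
Proof.
  intros Hcons Ha Hb Hl.
  destruct (Hcons x y (sigma x y a) (sigma x y b)
              (ex_intro _ a (conj Ha eq_refl)) (ex_intro _ b (conj Hb eq_refl)) l Hl)
    as [s [Hs Hp]].
  assert (Hda : d (sigma x y a) (sigma x y s) = l * (Rabs (a - b) * d x y)).
  { rewrite <- Hp, bicombing_dist_l, bicombing_dist by lra; reflexivity. }
  assert (Hdb : d (sigma x y s) (sigma x y b) = (1 - l) * (Rabs (a - b) * d x y)).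
  { rewrite <- Hp, bicombing_dist_r, bicombing_dist by lra; reflexivity. }
  rewrite !bicombing_dist in Hda, Hdb by lra; rewrite Hp.
  pose proof (dist_ge0 x y) as HD.
  assert (Haff : (s - a) * d x y = l * ((b - a) * d x y)).
  { apply eq_mul_of_Rabs_split; [exact Hl | |].
    - rewrite !Rabs_mult, (Rabs_pos_eq (d x y) HD), (Rabs_minus_sym s a),
        (Rabs_minus_sym b a), Hda; ring.
    - replace ((b - a) * d x y - (s - a) * d x y) with ((b - s) * d x y) by ring.
      rewrite !Rabs_mult, (Rabs_pos_eq (d x y) HD), (Rabs_minus_sym b s),
        (Rabs_minus_sym b a), Hdb; ring. }
  apply dist_eq0; rewrite bicombing_dist by nra.
  rewrite <- (Rabs_pos_eq (d x y) HD), <- Rabs_mult.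
  replace ((s - ((1 - l) * a + l * b)) * d x y) with 0 by lra.
  apply Rabs_R0.
Qed.

End Bicombing.

Section Polygon.

Variables (sigma : X -> X -> R -> X) (n : nat) (p : nat -> X).
Hypothesis sigma_bicombing : is_bicombing d sigma.
Hypothesis n_ge1 : (1 <= n)%nat.

Lemma polygon_0 : polygon sigma n p 0 = p 0%nat.
Proof.
  unfold polygon; rewrite piece_0 by exact n_ge1.
  replace (INR n * 0 - INR 0) with 0 by (simpl; ring).
  apply (bicombing_0 sigma sigma_bicombing).
Qed.

Lemma polygon_1 : polygon sigma n p 1 = p n.
Proof.
  unfold polygon; rewrite piece_1 by exact n_ge1.
  replace (S (n - 1)) with n by lia.
  replace (INR n * 1 - INR (n - 1)) with 1 by (rewrite minus_INR by lia; simpl; ring).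
  apply (bicombing_1 sigma sigma_bicombing).
Qed.

Lemma polygon_dist_le L : (forall i, (i < n)%nat -> d (p i) (p (S i)) <= L) ->
  forall s t, 0 <= s -> s <= t -> t <= 1 ->
  d (polygon sigma n p s) (polygon sigma n p t) <= (t - s) * INR n * L.
Proof.
  intros Hstep s t Hs Hst Ht.
  destruct (Rle_lt_or_eq_dec s t Hst) as [Hlt | <-]; [| rewrite dist_xx; lra].
  destruct (piece_spec n s n_ge1 ltac:(lra)) as [Hi Hsi].
  destruct (piece_spec n t n_ge1 ltac:(lra)) as [Hj Htj].
  assert (Hnst : INR n * s < INR n * t)
    by (apply Rmult_lt_compat_l; [apply lt_0_INR, n_ge1 | exact Hlt]).
  unfold polygon; set (i := piece n s) in *; set (j := piece n t) in *.
  assert (HL : 0 <= L)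
    by (pose proof (Hstep 0%nat ltac:(lia)); pose proof (dist_ge0 (p 0%nat) (p 1%nat)); lra).
  pose proof (Hstep i Hi); pose proof (Hstep j Hj).
  destruct (Nat.lt_total i j) as [Hij | [Hij | Hij]].
  - pose proof (chain_dist_le p n L Hstep (j - S i) (S i) ltac:(lia)) as Hchain.
    replace (S i + (j - S i))%nat with j in Hchain by lia.
    rewrite minus_INR, S_INR in Hchain by lia.
    pose proof (dist_triangle (sigma (p i) (p (S i)) (INR n * s - INR i)) (p (S i))
                  (sigma (p j) (p (S j)) (INR n * t - INR j))).
    pose proof (dist_triangle (p (S i)) (p j) (sigma (p j) (p (S j)) (INR n * t - INR j))).
    rewrite (bicombing_dist_r sigma sigma_bicombing) in * by lra.
    rewrite (bicombing_dist_l sigma sigma_bicombing) in * by lra.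
    assert (INR (S i) <= INR j) by (apply le_INR; lia); rewrite S_INR in *.
    nra.
  - rewrite <- Hij in *; rewrite (bicombing_dist_le sigma sigma_bicombing) by lra.
    apply Rle_trans with ((INR n * t - INR i - (INR n * s - INR i)) * L);
      [apply Rmult_le_compat_l |]; lra.
  - exfalso; assert (INR (S j) <= INR i) by (apply le_INR; lia); rewrite S_INR in *; lra.
Qed.

Lemma polygon_geodesic x y : p 0%nat = x -> p n = y ->
  (forall i, (i < n)%nat -> d (p i) (p (S i)) <= d x y / INR n) ->
  is_geodesic d (polygon sigma n p) x y.
Proof.
  intros Hx Hy Hstep.
  pose proof (lt_0_INR n n_ge1) as Hn.
  assert (Hle : forall s t, 0 <= s -> s <= t -> t <= 1 ->
            d (polygon sigma n p s) (polygon sigma n p t) <= (t - s) * d x y).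
  { intros s t Hs Hst Ht.
    replace ((t - s) * d x y) with ((t - s) * INR n * (d x y / INR n)) by (field; lra).
    apply polygon_dist_le; assumption. }
  assert (Heq : forall s t, 0 <= s -> s <= t -> t <= 1 ->
            d (polygon sigma n p s) (polygon sigma n p t) = (t - s) * d x y).
  { intros s t Hs Hst Ht; apply Rle_antisym; [apply Hle; lra |].
    pose proof (Hle 0 s ltac:(lra) Hs ltac:(lra)) as H0s.
    pose proof (Hle t 1 ltac:(lra) Ht ltac:(lra)) as Ht1.
    rewrite polygon_0, Hx in H0s; rewrite polygon_1, Hy in Ht1.
    pose proof (dist_triangle x (polygon sigma n p s) y).
    pose proof (dist_triangle (polygon sigma n p s) (polygon sigma n p t) y).
    lra. }
  split; [rewrite polygon_0; exact Hx |].
  split; [rewrite polygon_1; exact Hy |].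
  intros s t Hs Ht; destruct (Rle_dec s t).
  - rewrite Heq, Rabs_left1 by lra; ring.
  - rewrite dist_sym, Heq, Rabs_right by lra; ring.
Qed.

Lemma polygon_conical (p' : nat -> X) a b t :
  is_conical d sigma ->
  (forall i, (i <= n)%nat ->
     d (p i) (p' i) <= (1 - INR i / INR n) * a + INR i / INR n * b) ->
  0 <= t <= 1 ->
  d (polygon sigma n p t) (polygon sigma n p' t) <= (1 - t) * a + t * b.
Proof.
  intros Hcon Hnodes Ht.
  pose proof (lt_0_INR n n_ge1) as Hn.
  destruct (piece_spec n t n_ge1 Ht) as [Hi Hti].
  unfold polygon; set (i := piece n t) in *.
  set (l := INR n * t - INR i).
  assert (Hl : 0 <= l <= 1) by (unfold l; lra).
  eapply Rle_trans; [apply Hcon; exact Hl |].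
  pose proof (Rmult_le_compat_l (1 - l) _ _ ltac:(lra) (Hnodes i ltac:(lia))).
  pose proof (Rmult_le_compat_l l _ _ ltac:(lra) (Hnodes (S i) ltac:(lia))).
  assert (Ht' : t = (INR i + l) / INR n) by (unfold l; field; lra).
  replace ((1 - t) * a + t * b) with
    ((1 - l) * ((1 - INR i / INR n) * a + INR i / INR n * b) +
     l * ((1 - INR (S i) / INR n) * a + INR (S i) / INR n * b))
    by (rewrite Ht', S_INR; field; lra).
  lra.
Qed.

Lemma polygon_consistent x y t :
  is_consistent sigma ->
  (forall i, (i <= n)%nat -> p i = sigma x y (INR i / INR n)) ->
  0 <= t <= 1 -> polygon sigma n p t = sigma x y t.
Proof.
  intros Hcons Hnodes Ht.
  destruct (piece_spec n t n_ge1 Ht) as [Hi Hti].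
  unfold polygon; set (i := piece n t) in *.
  rewrite !Hnodes by lia.
  rewrite (consistent_bicombing_comp sigma sigma_bicombing x y _ _ _ Hcons)
    by (try apply INR_ratio_range; lia || lra).
  f_equal; rewrite S_INR; field; apply Rgt_not_eq, (lt_0_INR n n_ge1).
Qed.

End Polygon.

Section Nodes.

Variables (sigma tau : X -> X -> R -> X) (n : nat).
Hypothesis sigma_bicombing : is_bicombing d sigma.
Hypothesis tau_bicombing : is_bicombing d tau.
Hypothesis sigma_conical : is_conical d sigma.
Hypothesis tau_conical : is_conical d tau.
Hypothesis n_ge1 : (1 <= n)%nat.

Lemma cpt_eq x y i :
  cpt sigma tau n x y i = sigma (tau x y (cpt_lo n i)) (tau x y (cpt_hi n i)) (1 / 2).
Proof.
  unfold cpt, cpt_lo, cpt_hi.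
  destruct (Nat.eqb i 0); [| destruct (Nat.eqb i n); [| reflexivity]].
  - rewrite (bicombing_0 tau), (bicombing_xx sigma) by (assumption || lra); reflexivity.
  - rewrite (bicombing_1 tau), (bicombing_xx sigma) by (assumption || lra); reflexivity.
Qed.

Lemma cpt_step_le x y i : (i < n)%nat ->
  d (cpt sigma tau n x y i) (cpt sigma tau n x y (S i)) <= d x y / INR n.
Proof.
  intros Hi; pose proof (lt_0_INR n n_ge1).
  destruct (cpt_lo_hi_range n n_ge1 i ltac:(lia)) as [Hlo Hhi].
  destruct (cpt_lo_hi_range n n_ge1 (S i) ltac:(lia)) as [Hlo' Hhi'].
  pose proof (cpt_lo_le_succ n n_ge1 i Hi); pose proof (cpt_hi_le_succ n n_ge1 i Hi).
  assert (Hgrowth : cpt_lo n (S i) - cpt_lo n i + (cpt_hi n (S i) - cpt_hi n i) = 2 / INR n).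
  { pose proof (cpt_lo_hi_sum n n_ge1 i ltac:(lia)).
    pose proof (cpt_lo_hi_sum n n_ge1 (S i) Hi).
    assert (INR (S i) / INR n = INR i / INR n + 1 / INR n) by (rewrite S_INR; field; lra).
    lra. }
  rewrite !cpt_eq.
  eapply Rle_trans; [apply sigma_conical; lra |].
  rewrite !(bicombing_dist_le tau) by (assumption || lra).
  replace (d x y / INR n) with (1 / 2 * (2 / INR n * d x y)) by (field; lra).
  rewrite <- Hgrowth; apply Req_le; field.
Qed.

Lemma cpt_conical x y x' y' i : (i <= n)%nat ->
  d (cpt sigma tau n x y i) (cpt sigma tau n x' y' i) <=
  (1 - INR i / INR n) * d x x' + INR i / INR n * d y y'.
Proof.
  intros Hi; destruct (cpt_lo_hi_range n n_ge1 i Hi) as [Hlo Hhi].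
  rewrite !cpt_eq.
  eapply Rle_trans; [apply sigma_conical; lra |].
  pose proof (tau_conical x y x' y' _ Hlo); pose proof (tau_conical x y x' y' _ Hhi).
  replace (INR i / INR n) with ((cpt_lo n i + cpt_hi n i) / 2)
    by (rewrite (cpt_lo_hi_sum n n_ge1 i Hi); lra).
  lra.
Qed.

End Nodes.

Lemma cpt_consistent sigma n x y i :
  is_bicombing d sigma -> is_consistent sigma -> (1 <= n)%nat -> (i <= n)%nat ->
  cpt sigma sigma n x y i = sigma x y (INR i / INR n).
Proof.
  intros Hbi Hcons Hn Hi; destruct (cpt_lo_hi_range n Hn i Hi) as [Hlo Hhi].
  rewrite (cpt_eq sigma sigma n Hbi Hbi),
    (consistent_bicombing_comp sigma Hbi x y _ _ _ Hcons) by lra.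
  f_equal; pose proof (cpt_lo_hi_sum n Hn i Hi); lra.
Qed.

End Metric.

Lemma c_sigma_polygon {X : Type} (sigma tau : X -> X -> R -> X) n x y :
  c_sigma sigma n tau x y = polygon sigma n (cpt sigma tau n x y).
Proof. reflexivity. Qed.

Theorem lemma5p1 (X : Type) (d : X -> X -> R) (sigma tau : X -> X -> R -> X) (n : nat) :
  is_metric d ->
  conical_bicombing d sigma ->
  conical_bicombing d tau ->
  (1 <= n)%nat ->
  conical_bicombing d (c_sigma sigma n tau) /\
  (is_consistent sigma ->
     forall x y t, 0 <= t <= 1 -> c_sigma sigma n sigma x y t = sigma x y t).
Proof.
  intros Hd [Hsb Hsc] [Htb Htc] Hn.
  split; [split |].
  - intros x y; rewrite c_sigma_polygon.
    apply (polygon_geodesic X d Hd sigma n _ Hsb Hn); [reflexivity | apply cpt_n, Hn |].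
    intros i Hi; apply cpt_step_le; assumption.
  - intros x y x' y' t Ht; rewrite !c_sigma_polygon.
    apply (polygon_conical X d sigma n _ Hn); [exact Hsc | | exact Ht].
    intros i Hi; apply cpt_conical; assumption.
  - intros Hcons x y t Ht; rewrite c_sigma_polygon.
    apply (polygon_consistent X d Hd sigma n _ Hsb Hn); [exact Hcons | | exact Ht].
    intros i Hi; apply (cpt_consistent X d Hd); assumption.
Qed.
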